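(* Let $f_1,\dots,f_n$ satisfy Assumptions A1 and A2. Then for all $\beta,\beta'\in\Delta^{n-1}$, \[\|\nabla x^*(\beta)-\nabla x^*(\beta')\|_{1,2}\le\frac{2L^2R}{\mu^2}\left(1+\frac{L_HR}{\mu}\right)\|\beta-\beta'\|_1.\]
   Context: Assumption A1: each $f_i:\mathbb{R}^d\to\mathbb{R}$ is twice differentiable with $\mu\mathbf{I}\preceq\nabla^2 f_i\preceq L\mathbf{I}$, $0<\mu\le L$. Assumption A2: $\|\nabla^2 f_i(x)-\nabla^2 f_i(y)\|_2\le L_H\|x-y\|_2$ for all $x,y,i$. $F=(f_1,\dots,f_n)$, $\nabla F(x)\in\mathbb{R}^{n\times d}$ its Jacobian, $\Delta^{n-1}$ the simplex, $f_\beta=\sum_i\beta_if_i$, $x^*(\beta)=x_\beta=\operatorname{argmin}_xf_\beta(x)$, with $\nabla x^*(\beta)=-\nabla^2f_\beta(x_\beta)^{-1}\nabla F(x_\beta)^\top$. $R$ is the $\ell_2$-diameter of the Pareto set of $F$ (points $x$ with $\nabla f_\beta(x)=0$ for some $\beta$). $\|A\|_{1,2}:=\sup_{\|z\|_1=1}\|Az\|_2$. *)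

From mathcomp Require Import all_boot all_order all_algebra.
From mathcomp Require Import all_classical all_reals all_analysis.
Set Implicit Arguments. Unset Strict Implicit. Unset Printing Implicit Defensive.
Import Order.TTheory GRing.Theory Num.Theory.
Import numFieldNormedType.Exports.
Local Open Scope classical_set_scope.
Local Open Scope ring_scope.

Section Defs.
Variable R : realType.

Definition vnorm2 {m k : nat} (v : 'M[R]_(m, k)) : R :=
  Num.sqrt (\sum_i \sum_j (v i j) ^+ 2).

Definition vnorm1 {k : nat} (z : 'cV[R]_k) : R := \sum_i `|z i 0|.

Definition spec_norm {d : nat} (M : 'M[R]_d) : R :=
  sup [set vnorm2 (M *m v) | v in [set v : 'cV[R]_d | vnorm2 v = 1]].

Definition norm12 {m k : nat} (A : 'M[R]_(m, k)) : R :=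
  sup [set vnorm2 (A *m z) | z in [set z : 'cV[R]_k | vnorm1 z = 1]].

Definition ebasis {d : nat} (j : 'I_d) : 'rV[R]_d := delta_mx 0 j.

Definition partial {d : nat} (f : 'rV[R]_d -> R) (j : 'I_d) (x : 'rV[R]_d) : R :=
  'D_(ebasis j) f x.
Definition grad {d : nat} (f : 'rV[R]_d -> R) (x : 'rV[R]_d) : 'rV[R]_d :=
  \row_j partial f j x.
Definition hess {d : nat} (f : 'rV[R]_d -> R) (x : 'rV[R]_d) : 'M[R]_d :=
  \matrix_(i, j) 'D_(ebasis j) (fun y => partial f i y) x.

Definition twice_diff {d : nat} (f : 'rV[R]_d -> R) : Prop :=
  forall x, differentiable f x /\ differentiable (grad f) x.

Definition in_simplex {n : nat} (b : 'I_n -> R) : Prop :=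
  (forall i, 0 <= b i) /\ \sum_i b i = 1.

Definition l1dist {n : nat} (b b' : 'I_n -> R) : R := \sum_i `|b i - b' i|.

Definition fbeta {n d : nat} (F : 'I_n -> 'rV[R]_d -> R) (b : 'I_n -> R)
  (x : 'rV[R]_d) : R := \sum_i b i * F i x.

Definition xstar {n d : nat} (F : 'I_n -> 'rV[R]_d -> R) (b : 'I_n -> R) : 'rV[R]_d :=
  xget 0 [set x | forall y, fbeta F b x <= fbeta F b y].

Definition jacF {n d : nat} (F : 'I_n -> 'rV[R]_d -> R) (x : 'rV[R]_d) : 'M[R]_(n, d) :=
  \matrix_(i, j) partial (F i) j x.

Definition dxstar {n d : nat} (F : 'I_n -> 'rV[R]_d -> R) (b : 'I_n -> R) : 'M[R]_(d, n) :=
  - (invmx (hess (fbeta F b) (xstar F b)) *m (jacF F (xstar F b))^T).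

Definition pareto_set {n d : nat} (F : 'I_n -> 'rV[R]_d -> R) : set 'rV[R]_d :=
  [set x | exists b, in_simplex b /\ grad (fbeta F b) x = 0].

Definition pareto_diam {n d : nat} (F : 'I_n -> 'rV[R]_d -> R) : R :=
  sup [set r : R | exists x y : 'rV[R]_d,
    pareto_set F x /\ pareto_set F y /\ r = vnorm2 (x - y)].

End Defs.

(* [||M||_{1,2}] is the largest column norm of [M], and column [j] of
   [nabla x*(beta)] is [- A^-1 g], with [A] the Hessian of [f_beta] at its
   minimizer [x_beta] and [g] the gradient of [f_j] there.  With primes for [beta'],
     [- A^-1 g + A'^-1 g' = A^-1 ((A - A') A'^-1 g' + (g' - g))].
   Strong convexity gives [|A^-1 y| <= |y| / mu].  Since [grad f_j] vanishes at
   the Pareto point [x_(e_j)], L-smoothness bounds [|g'|] by [L R].  Strong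
   monotonicity of [grad f_beta], together with
   [grad f_beta (x_beta') = sum_i (beta_i - beta'_i) grad f_i (x_beta')], gives
   [|x_beta - x_beta'| <= L R / mu * |beta - beta'|_1], and then
   [|A - A'| <= L |beta - beta'|_1 + L_H |x_beta - x_beta'|].
   The Hessians need not be symmetric, so the operator bound [|hess f_i| <= L]
   is derived from co-coercivity of the gradient rather than read off the
   quadratic form. *)

From mathcomp Require Import all_boot all_order all_algebra.
From mathcomp Require Import all_classical all_reals all_analysis.
From mathcomp Require Import ring lra.
Set Implicit Arguments. Unset Strict Implicit. Unset Printing Implicit Defensive.
Import Order.TTheory GRing.Theory Num.Theory.
Import numFieldNormedType.Exports.
Local Open Scope classical_set_scope.
Local Open Scope ring_scope.

Section FrobeniusInnerProduct.
Variables (R : realType) (m k : nat).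
Implicit Types A B C : 'M[R]_(m, k).

Definition mxdot A B : R := \sum_i \sum_j A i j * B i j.

Lemma mxdotC A B : mxdot A B = mxdot B A.
Proof. by apply: eq_bigr => i _; apply: eq_bigr => j _; rewrite mulrC. Qed.

Lemma mxdotDl A B C : mxdot (A + B) C = mxdot A C + mxdot B C.
Proof.
rewrite /mxdot -big_split; apply: eq_bigr => i _.
by rewrite -big_split; apply: eq_bigr => j _; rewrite mxE mulrDl.
Qed.

Lemma mxdotZl a A C : mxdot (a *: A) C = a * mxdot A C.
Proof.
rewrite /mxdot mulr_sumr; apply: eq_bigr => i _.
by rewrite mulr_sumr; apply: eq_bigr => j _; rewrite mxE mulrA.
Qed.

Lemma mxdotNl A C : mxdot (- A) C = - mxdot A C.
Proof. by rewrite -scaleN1r mxdotZl mulN1r. Qed.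

Lemma mxdotBl A B C : mxdot (A - B) C = mxdot A C - mxdot B C.
Proof. by rewrite mxdotDl mxdotNl. Qed.

Lemma mxdot0l C : mxdot 0 C = 0.
Proof. by rewrite -(scale0r 0) mxdotZl mul0r. Qed.

Lemma mxdotDr A B C : mxdot C (A + B) = mxdot C A + mxdot C B.
Proof. by rewrite mxdotC mxdotDl !(mxdotC C). Qed.

Lemma mxdotZr a A C : mxdot C (a *: A) = a * mxdot C A.
Proof. by rewrite mxdotC mxdotZl mxdotC. Qed.

Lemma mxdotNr A C : mxdot C (- A) = - mxdot C A.
Proof. by rewrite mxdotC mxdotNl mxdotC. Qed.

Lemma mxdotBr A B C : mxdot C (A - B) = mxdot C A - mxdot C B.
Proof. by rewrite mxdotDr mxdotNr. Qed.

Lemma mxdot0r C : mxdot C 0 = 0.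
Proof. by rewrite mxdotC mxdot0l. Qed.

Lemma mxdot_suml I (r : seq I) (P : pred I) (X : I -> 'M[R]_(m, k)) C :
  mxdot (\sum_(i <- r | P i) X i) C = \sum_(i <- r | P i) mxdot (X i) C.
Proof. exact: (big_morph (mxdot^~ C) (fun A B => mxdotDl A B C) (mxdot0l C)). Qed.

Lemma mxdotxx_ge0 A : 0 <= mxdot A A.
Proof. by apply: sumr_ge0 => i _; apply: sumr_ge0 => j _; rewrite -expr2 sqr_ge0. Qed.

Lemma mxdotxx_eq0 A : (mxdot A A == 0) = (A == 0).
Proof.
apply/idP/eqP => [|->]; last by rewrite mxdot0l.
rewrite psumr_eq0 => [/allP A0|i _]; last first.
  by apply: sumr_ge0 => j _; rewrite -expr2 sqr_ge0.
apply/matrixP => i j; move: (A0 i (mem_index_enum _)).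
rewrite psumr_eq0 => [/allP/(_ j (mem_index_enum _))|j' _]; last by rewrite -expr2 sqr_ge0.
by rewrite /= -expr2 sqrf_eq0 mxE => /eqP.
Qed.

Lemma vnorm2E A : vnorm2 A = Num.sqrt (mxdot A A).
Proof. by congr Num.sqrt; apply: eq_bigr => i _; apply: eq_bigr => j _; rewrite expr2. Qed.

Lemma vnorm2_ge0 A : 0 <= vnorm2 A.
Proof. by rewrite vnorm2E sqrtr_ge0. Qed.

Lemma sqr_vnorm2 A : vnorm2 A ^+ 2 = mxdot A A.
Proof. by rewrite vnorm2E sqr_sqrtr // mxdotxx_ge0. Qed.

Lemma vnorm2_eq0 A : (vnorm2 A == 0) = (A == 0).
Proof. by rewrite -sqrf_eq0 sqr_vnorm2 mxdotxx_eq0. Qed.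

Lemma vnorm20 : vnorm2 (0 : 'M[R]_(m, k)) = 0.
Proof. by apply/eqP; rewrite vnorm2_eq0. Qed.

Lemma vnorm2_gt0 A : (0 < vnorm2 A) = (A != 0).
Proof. by rewrite lt_def vnorm2_eq0 vnorm2_ge0 andbT. Qed.

(* Expand [0 <= <|B| A - |A| B, |B| A - |A| B>]. *)
Lemma mxdot_le A B : mxdot A B <= vnorm2 A * vnorm2 B.
Proof.
have [->|A0] := eqVneq A 0; first by rewrite mxdot0l vnorm20 mul0r.
have [->|B0] := eqVneq B 0; first by rewrite mxdot0r vnorm20 mulr0.
have := mxdotxx_ge0 (vnorm2 B *: A - vnorm2 A *: B).
rewrite !(mxdotBl, mxdotBr, mxdotZl, mxdotZr) -!sqr_vnorm2 (mxdotC B A).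
have ab_gt0 : 0 < vnorm2 A * vnorm2 B by rewrite mulr_gt0 ?vnorm2_gt0.
nra.
Qed.

Lemma vnorm2Z a A : vnorm2 (a *: A) = `|a| * vnorm2 A.
Proof. by rewrite !vnorm2E mxdotZl mxdotZr mulrA -expr2 sqrtrM ?sqr_ge0 // sqrtr_sqr. Qed.

Lemma vnorm2N A : vnorm2 (- A) = vnorm2 A.
Proof. by rewrite -scaleN1r vnorm2Z normrN normr1 mul1r. Qed.

Lemma normr_mxdot_le A B : `|mxdot A B| <= vnorm2 A * vnorm2 B.
Proof. by rewrite ler_norml mxdot_le andbT lerNl -mxdotNl -(vnorm2N A) mxdot_le. Qed.

Lemma vnorm2D A B : vnorm2 (A + B) <= vnorm2 A + vnorm2 B.
Proof.
rewrite -(ler_pXn2r (n := 2)) ?nnegrE ?addr_ge0 ?vnorm2_ge0 //.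
rewrite sqr_vnorm2 !(mxdotDl, mxdotDr) sqrrD -!sqr_vnorm2 (mxdotC B A).
have := mxdot_le A B; lra.
Qed.

Lemma vnorm2B A B : vnorm2 (A - B) <= vnorm2 A + vnorm2 B.
Proof. by rewrite -(vnorm2N B) vnorm2D. Qed.

Lemma vnorm2_sum I (r : seq I) (P : pred I) (X : I -> 'M[R]_(m, k)) :
  vnorm2 (\sum_(i <- r | P i) X i) <= \sum_(i <- r | P i) vnorm2 (X i).
Proof.
elim/big_ind2: _ => [|A1 A2 a1 a2 h1 h2|//]; first by rewrite vnorm20.
exact: le_trans (vnorm2D _ _) (lerD h1 h2).
Qed.

Lemma normr_entry_le_vnorm2 A i j : `|A i j| <= vnorm2 A.
Proof.
rewrite vnorm2E -sqrtr_sqr ler_sqrt ?mxdotxx_ge0 //.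
rewrite /mxdot (bigD1 i) //= (bigD1 j) //= expr2 -addrA lerDl.
apply: addr_ge0; first by apply: sumr_ge0 => l _; rewrite -expr2 sqr_ge0.
by apply: sumr_ge0 => l _; apply: sumr_ge0 => l' _; rewrite -expr2 sqr_ge0.
Qed.

End FrobeniusInnerProduct.

Lemma mxdot_tr (R : realType) m k (A B : 'M[R]_(m, k)) : mxdot A^T B^T = mxdot A B.
Proof.
rewrite /mxdot exchange_big.
by apply: eq_bigr => i _; apply: eq_bigr => j _; rewrite !mxE.
Qed.

Lemma vnorm2_tr (R : realType) m k (A : 'M[R]_(m, k)) : vnorm2 A^T = vnorm2 A.
Proof. by rewrite !vnorm2E mxdot_tr. Qed.

Section MatrixNorms.
Variable R : realType.

Lemma mxdot_cV d (u v : 'cV[R]_d) : mxdot u v = (u^T *m v) 0 0.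
Proof. by rewrite mxE; apply: eq_bigr => i _; rewrite big_ord1 mxE. Qed.

Lemma mulmx_vnorm2_le m k (M : 'M[R]_(m, k)) (c : 'cV[R]_k) :
  vnorm2 (M *m c) <= vnorm2 M * vnorm2 c.
Proof.
rewrite -(ler_pXn2r (n := 2)) ?nnegrE ?mulr_ge0 ?vnorm2_ge0 //.
rewrite exprMn !sqr_vnorm2 {1 2}/mxdot mulr_suml; apply: ler_sum => i _.
have -> : \sum_j (M *m c) i j * (M *m c) i j = mxdot (row i M) c^T ^+ 2.
  rewrite big_ord1 expr2 mxE /mxdot big_ord1.
  by congr (_ * _); apply: eq_bigr => l _; rewrite !mxE.
have -> : \sum_j M i j * M i j = mxdot (row i M) (row i M).
  by rewrite /mxdot big_ord1; apply: eq_bigr => l _; rewrite !mxE.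
rewrite -!sqr_vnorm2 -(vnorm2_tr c).
have := normr_mxdot_le (row i M) c^T; rewrite ler_norml vnorm2_tr => /andP[lo hi].
have := vnorm2_ge0 (row i M); have := vnorm2_ge0 c; nra.
Qed.

Lemma spec_norm_has_ubound d (M : 'M[R]_d) :
  has_ubound [set vnorm2 (M *m v) | v in [set v : 'cV[R]_d | vnorm2 v = 1]].
Proof.
exists (vnorm2 M) => _ [v /= v1 <-].
by have := mulmx_vnorm2_le M v; rewrite v1 mulr1.
Qed.

(* Without unit vectors ([d = 0]) the set is empty and [sup set0 = 0]. *)
Lemma spec_norm_ge0 d (M : 'M[R]_d) : 0 <= spec_norm M.
Proof.
have [[v v1]|no_unit] := pselect (exists v : 'cV[R]_d, vnorm2 v = 1).
  have := ub_le_sup (spec_norm_has_ubound M) (ex_intro2 _ _ v v1 erefl).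
  exact: le_trans (vnorm2_ge0 _).
rewrite /spec_norm.
suff -> : [set vnorm2 (M *m v) | v in [set v : 'cV[R]_d | vnorm2 v = 1]] = set0.
  by rewrite sup0.
by apply/seteqP; split => // x [v v1 _]; apply: no_unit; exists v.
Qed.

Lemma spec_norm_mulmx_le d (M : 'M[R]_d) (v : 'cV[R]_d) :
  vnorm2 (M *m v) <= spec_norm M * vnorm2 v.
Proof.
have [->|v0] := eqVneq v 0; first by rewrite mulmx0 !vnorm20 mulr0.
have v_gt0 : 0 < vnorm2 v by rewrite vnorm2_gt0.
have unit_v : vnorm2 ((vnorm2 v)^-1 *: v) = 1.
  by rewrite vnorm2Z ger0_norm ?invr_ge0 ?vnorm2_ge0 // mulVf ?gt_eqF.
have := ub_le_sup (spec_norm_has_ubound M) (ex_intro2 _ _ _ unit_v erefl).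
rewrite -scalemxAr vnorm2Z ger0_norm ?invr_ge0 ?vnorm2_ge0 //.
by rewrite -ler_pdivrMr // mulrC.
Qed.

Lemma norm12_le_col m n (M : 'M[R]_(m, n)) (C : R) : (0 < n)%N ->
  (forall j, vnorm2 (col j M) <= C) -> norm12 M <= C.
Proof.
move=> n_gt0 col_le; apply: ge_sup.
  pose e : 'cV[R]_n := delta_mx (Ordinal n_gt0) 0.
  exists (vnorm2 (M *m e)), e => //=.
  rewrite /vnorm1 (bigD1 (Ordinal n_gt0)) //= big1 => [|i /negbTE i_neq].
    by rewrite !mxE !eqxx normr1 addr0.
  by rewrite mxE i_neq normr0.
move=> _ [z /= z1 <-].
have -> : M *m z = \sum_j z j 0 *: col j M.
  apply/matrixP => i l; rewrite mxE summxE; apply: eq_bigr => j _.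
  by rewrite !mxE (ord1 l) mulrC.
apply: le_trans (vnorm2_sum _ _ _) _.
rewrite -[C]mul1r -z1 /vnorm1 mulr_suml; apply: ler_sum => j _.
by rewrite vnorm2Z ler_wpM2l.
Qed.

Lemma lipschitz_const_ge0 d (M : 'rV[R]_d -> 'M[R]_d) (K : R) : (0 < d)%N ->
  (forall x y, spec_norm (M x - M y) <= K * vnorm2 (x - y)) -> 0 <= K.
Proof.
move=> d_gt0 M_lip; pose e : 'rV[R]_d := delta_mx 0 (Ordinal d_gt0).
have e_gt0 : 0 < vnorm2 e.
  rewrite vnorm2_gt0; apply/eqP => /matrixP /(_ 0 (Ordinal d_gt0)).
  by rewrite !mxE !eqxx; apply/eqP; exact: oner_neq0.
by have := le_trans (spec_norm_ge0 _) (M_lip e 0); rewrite subr0 pmulr_lge0.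
Qed.

Lemma sub_opp_invmx_mulmx d (A A' : 'M[R]_d) (g g' : 'cV[R]_d) :
  A \in unitmx -> A' \in unitmx ->
  - (invmx A *m g) - - (invmx A' *m g') = invmx A *m ((A - A') *m (invmx A' *m g') + (g' - g)).
Proof.
move=> A_unit A'_unit.
rewrite mulmxDr mulmxBl !mulmxBr !mulmxA mulVmx // mul1mx.
rewrite -[invmx A *m A' *m invmx A']mulmxA mulmxV // mulmx1.
by rewrite addrA subrK opprK addrC.
Qed.

End MatrixNorms.

Section CoerciveMatrix.
Variables (R : realType) (d : nat) (A : 'M[R]_d) (mu : R).
Hypothesis mu_gt0 : 0 < mu.
Hypothesis A_coercive : forall c : 'cV[R]_d, mu * vnorm2 c ^+ 2 <= (c^T *m A *m c) 0 0.

Lemma coercive_mulmx_ge (c : 'cV[R]_d) : mu * vnorm2 c <= vnorm2 (A *m c).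
Proof.
have [->|c0] := eqVneq c 0; first by rewrite vnorm20 mulr0 vnorm2_ge0.
have c_gt0 : 0 < vnorm2 c by rewrite vnorm2_gt0.
have CS : (c^T *m A *m c) 0 0 <= vnorm2 c * vnorm2 (A *m c).
  by rewrite -mulmxA -mxdot_cV mxdot_le.
by have := le_trans (A_coercive c) CS; rewrite expr2 mulrA mulrC ler_pM2l.
Qed.

Lemma coercive_unitmx : A \in unitmx.
Proof.
rewrite -unitmx_tr -row_free_unit; apply: inj_row_free => v vA0.
have Av0 : A *m v^T = 0 by rewrite -[A]trmxK -trmx_mul vA0 trmx0.
have := coercive_mulmx_ge v^T; rewrite Av0 vnorm20 pmulr_rle0 // vnorm2_tr.
by move=> v_le0; apply/eqP; rewrite -vnorm2_eq0 eq_le v_le0 vnorm2_ge0.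
Qed.

Lemma coercive_invmx_le (y : 'cV[R]_d) : vnorm2 (invmx A *m y) <= vnorm2 y / mu.
Proof.
rewrite ler_pdivlMr // mulrC.
by have := coercive_mulmx_ge (invmx A *m y); rewrite mulmxA mulmxV ?coercive_unitmx ?mul1mx.
Qed.

End CoerciveMatrix.

Section DirectionalDerivatives.
Variables (R : realType) (d : nat).
Implicit Types (f : 'rV[R]_d -> R) (x v : 'rV[R]_d).

Lemma derive_ebasis_sum (W : normedModType R) (g : 'rV[R]_d -> W) x v :
  differentiable g x -> 'D_v g x = \sum_k v 0 k *: 'D_(ebasis R k) g x.
Proof.
move=> dg; rewrite deriveE // {1}(row_sum_delta v) linear_sum.
by apply: eq_bigr => k _; rewrite linearZ deriveE.
Qed.

Lemma partialE f j : partial f j = fun y => grad f y 0 j.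
Proof. by apply: funext => y; rewrite mxE. Qed.

Lemma derive_dot_grad f x v : differentiable f x -> 'D_v f x = mxdot (grad f x) v.
Proof.
move=> df; rewrite derive_ebasis_sum // /mxdot big_ord1.
by apply: eq_bigr => k _; rewrite mxE mulrC.
Qed.

Lemma derivable_partial f x v j : differentiable (grad f) x -> derivable (partial f j) x v.
Proof. by rewrite partialE => /diff_derivable/derivable_mxP; apply. Qed.

Lemma derive_partial f x v j : differentiable (grad f) x ->
  'D_v (partial f j) x = (hess f x *m v^T) j 0.
Proof.
move=> dg; rewrite partialE.
have Dgrad u : 'D_u (fun y => grad f y 0 j) x = ('D_u (grad f) x) 0 j.
  by rewrite derive_mx ?mxE //; exact: diff_derivable.
rewrite Dgrad derive_ebasis_sum // summxE mxE; apply: eq_bigr => k _.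
by rewrite !mxE -Dgrad -partialE mulrC.
Qed.

Lemma is_derive_line (W : normedModType R) (g : 'rV[R]_d -> W) x v t :
  derivable g (x + t *: v) v ->
  is_derive t 1 (fun s => g (x + s *: v)) ('D_v g (x + t *: v)).
Proof.
move=> dg.
have E : (fun h : R => h^-1 *: (((fun s => g (x + s *: v)) \o shift t) (h *: 1) - g (x + t *: v)))
   = (fun h => h^-1 *: ((g \o shift (x + t *: v)) (h *: v) - g (x + t *: v))).
  apply: funext => h /=; congr (_ *: (g _ - _)).
  by rewrite /shift /= -[h *: 1]/(h * 1) mulr1 scalerDl addrCA addrA.
by apply: DeriveDef; rewrite /derivable /derive E.
Qed.

End DirectionalDerivatives.

Section RealFunctions.
Variable R : realType.

Lemma MVT_le (h dh : R -> R) (K a c : R) : a <= c ->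
  (forall t : R, is_derive t 1 h (dh t)) -> (forall t, a <= t <= c -> dh t <= K) ->
  h c - h a <= K * (c - a).
Proof.
move=> ac h_der dh_le.
have h_cont : continuous h.
  by move=> t; apply/differentiable_continuous/derivable1_diffP; case: (h_der t).
have [t t_in ->] := MVT_segment ac (fun t _ => h_der t) (continuous_subspaceT h_cont).
by rewrite ler_wpM2r ?subr_ge0 // dh_le //; move: t_in; rewrite in_itv.
Qed.

Lemma MVT_ge (h dh : R -> R) (K a c : R) : a <= c ->
  (forall t : R, is_derive t 1 h (dh t)) -> (forall t, a <= t <= c -> K <= dh t) ->
  K * (c - a) <= h c - h a.
Proof.
move=> ac h_der dh_ge.
have Nh_der (t : R) : is_derive t 1 (fun s => - h s) (- dh t) by exact: is_deriveN.
have Ndh_le t : a <= t <= c -> - dh t <= - K by move=> /dh_ge; rewrite lerN2.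
have := MVT_le ac Nh_der Ndh_le; rewrite mulNr; lra.
Qed.

Lemma is_derive_quadratic (c0 k t : R) :
  is_derive t 1 (fun s : R => c0 * s + k * s ^+ 2) (c0 + k * (2 * t)).
Proof.
have id_der : is_derive t 1 (@id R) 1 := is_derive_id t 1.
have -> : (fun s : R => c0 * s + k * s ^+ 2) = c0 \*: id + k \*: (id ^+ 2).
  by apply: funext => s /=; rewrite expr2.
apply: is_derive_eq (is_deriveD (is_deriveZ c0 id_der) (is_deriveZ k (is_deriveX 2 id_der))) _.
by rewrite /GRing.scale /= !mulr1 expr1.
Qed.

(* [chi] is [psi] minus its quadratic model; by the MVT it is nonincreasing on [0, 1]. *)
Lemma taylor2_le (psi phi q : R -> R) (K : R) :
  (forall t : R, is_derive t 1 psi (phi t)) -> (forall t : R, is_derive t 1 phi (q t)) ->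
  (forall t, 0 <= t <= 1 -> q t <= K) -> psi 1 - psi 0 - phi 0 <= K / 2.
Proof.
move=> psi_der phi_der q_le.
pose chi s := psi s - (phi 0 * s + K / 2 * s ^+ 2).
have chi_der (t : R) : is_derive t 1 chi (phi t - (phi 0 + K / 2 * (2 * t))).
  exact: is_deriveB (psi_der t) (is_derive_quadratic (phi 0) (K / 2) t).
have chi'_le0 t : 0 <= t <= 1 -> phi t - (phi 0 + K / 2 * (2 * t)) <= 0.
  move=> /andP[t_ge0 t_le1].
  have q_le' s : 0 <= s <= t -> q s <= K.
    by move=> /andP[s_ge0 s_le]; rewrite q_le // s_ge0 (le_trans s_le).
  have := MVT_le t_ge0 phi_der q_le'; lra.
have := MVT_le ler01 chi_der chi'_le0; rewrite /chi; lra.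
Qed.

Lemma taylor2_ge (psi phi q : R -> R) (K : R) :
  (forall t : R, is_derive t 1 psi (phi t)) -> (forall t : R, is_derive t 1 phi (q t)) ->
  (forall t, 0 <= t <= 1 -> K <= q t) -> K / 2 <= psi 1 - psi 0 - phi 0.
Proof.
move=> psi_der phi_der q_ge.
have Npsi_der (t : R) : is_derive t 1 (fun s => - psi s) (- phi t) by exact: is_deriveN.
have Nphi_der (t : R) : is_derive t 1 (fun s => - phi s) (- q t) by exact: is_deriveN.
have Nq_le t : 0 <= t <= 1 -> - q t <= - K by move=> /q_ge; rewrite lerN2.
have := taylor2_le Npsi_der Nphi_der Nq_le; lra.
Qed.

End RealFunctions.

Section ConvexSmoothFunction.
Variables (R : realType) (d : nat) (f : 'rV[R]_d -> R) (a b : R).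
Hypothesis f_twice_diff : twice_diff f.
Hypothesis hess_bounds : forall x (u : 'rV[R]_d),
  a * vnorm2 u ^+ 2 <= (u *m hess f x *m u^T) 0 0 /\
  (u *m hess f x *m u^T) 0 0 <= b * vnorm2 u ^+ 2.

Lemma is_derive_line_value x v (t : R) :
  is_derive t 1 (fun s => f (x + s *: v)) (mxdot (grad f (x + t *: v)) v).
Proof.
have [df _] := f_twice_diff (x + t *: v).
by rewrite -derive_dot_grad //; apply/is_derive_line/diff_derivable.
Qed.

Lemma is_derive_line_slope x u w (t : R) :
  is_derive t 1 (fun s => mxdot (grad f (x + s *: u)) w)
    ((w *m hess f (x + t *: u) *m u^T) 0 0).
Proof.
have [_ dg] := f_twice_diff (x + t *: u).
have -> : (fun s => mxdot (grad f (x + s *: u)) w) =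
    \sum_j (w 0 j \*: (fun s => partial f j (x + s *: u))).
  apply: funext => s; rewrite fct_sumE /mxdot big_ord1.
  by apply: eq_bigr => j _; rewrite mxE mulrC.
apply: is_derive_eq.
  apply: is_derive_sum => j; apply: is_deriveZ.
  exact/is_derive_line/derivable_partial.
rewrite -mulmxA mxE; apply: eq_bigr => j _.
by rewrite derive_partial.
Qed.

Lemma grad_strongly_monotone x v :
  a * vnorm2 v ^+ 2 <= mxdot (grad f (x + v) - grad f x) v.
Proof.
have := MVT_ge ler01 (is_derive_line_slope x v v) (fun t _ => (hess_bounds _ v).1).
by rewrite scale1r scale0r addr0 mxdotBl subr0 mulr1.
Qed.

Lemma taylor_lower x v : a / 2 * vnorm2 v ^+ 2 <= f (x + v) - f x - mxdot (grad f x) v.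
Proof.
have := taylor2_ge (is_derive_line_value x v) (is_derive_line_slope x v v)
  (fun t _ => (hess_bounds _ v).1).
by rewrite scale1r scale0r addr0 mulrAC.
Qed.

Lemma taylor_upper x v : f (x + v) - f x - mxdot (grad f x) v <= b / 2 * vnorm2 v ^+ 2.
Proof.
have := taylor2_le (is_derive_line_value x v) (is_derive_line_slope x v v)
  (fun t _ => (hess_bounds _ v).2).
by rewrite scale1r scale0r addr0 mulrAC.
Qed.

Hypothesis a_ge0 : 0 <= a.
Hypothesis b_gt0 : 0 < b.

(* Compare the values of [f] at [y - D / b], where [D] is the gradient
   increment, through the upper model at [y] and the lower model at [x]. *)
Lemma bregman_ge x y :
  vnorm2 (grad f y - grad f x) ^+ 2 <= 2 * b * (f y - f x - mxdot (grad f x) (y - x)).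
Proof.
set D := grad f y - grad f x; pose w := - (b^-1 *: D).
have up := taylor_upper y w.
have lo := taylor_lower x (y + w - x).
rewrite [x + _]addrC subrK in lo.
have lo_ge0 : 0 <= a / 2 * vnorm2 (y + w - x) ^+ 2.
  by rewrite mulr_ge0 ?divr_ge0 ?exprn_ge0 ?vnorm2_ge0.
have w_sqr : b / 2 * vnorm2 w ^+ 2 = b^-1 * mxdot D D / 2.
  rewrite sqr_vnorm2 /w mxdotNl mxdotNr opprK mxdotZl mxdotZr.
  by field; rewrite gt_eqF.
have grad_y_w : mxdot (grad f y) w = - (b^-1 * mxdot (grad f y) D).
  by rewrite /w mxdotNr mxdotZr.
have grad_x_w : mxdot (grad f x) (y + w - x) =
    mxdot (grad f x) (y - x) - b^-1 * mxdot (grad f x) D.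
  by rewrite /w !(mxdotDr, mxdotBr, mxdotNr, mxdotZr); ring.
have DD : b^-1 * mxdot D D = b^-1 * mxdot (grad f y) D - b^-1 * mxdot (grad f x) D.
  by rewrite {2}/D mxdotBl mulrBr.
have gap : b^-1 * mxdot D D / 2 <= f y - f x - mxdot (grad f x) (y - x) by lra.
suff -> : vnorm2 D ^+ 2 = 2 * b * (b^-1 * mxdot D D / 2).
  by apply: ler_wpM2l gap; rewrite mulr_ge0 ?ltW.
by rewrite sqr_vnorm2; field; rewrite gt_eqF.
Qed.

Lemma grad_lipschitz x y : vnorm2 (grad f y - grad f x) <= b * vnorm2 (y - x).
Proof.
set D := grad f y - grad f x.
have D_sym : vnorm2 (grad f x - grad f y) = vnorm2 D by rewrite -vnorm2N opprB.
have gaps : (f y - f x - mxdot (grad f x) (y - x)) + (f x - f y - mxdot (grad f y) (x - y))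
    = mxdot D (y - x).
  by rewrite -[x - y]opprB mxdotNr /D mxdotBl; ring.
have cocoercive : vnorm2 D ^+ 2 <= b * mxdot D (y - x).
  have := lerD (bregman_ge x y) (bregman_ge y x).
  rewrite -/D D_sym -(mulrDr (2 * b)) gaps; move: (vnorm2 D ^+ 2) (mxdot D (y - x)) => X Y.
  clear D_sym gaps; lra.
have [D0|D_neq0] := eqVneq (vnorm2 D) 0.
  by rewrite D0 mulr_ge0 ?vnorm2_ge0 ?ltW.
have D_gt0 : 0 < vnorm2 D by rewrite lt_def D_neq0 vnorm2_ge0.
have := le_trans cocoercive (ler_wpM2l (ltW b_gt0) (mxdot_le D (y - x))).
by rewrite expr2 mulrCA ler_pM2l.
Qed.

Lemma hess_bilinear_le (z u w : 'rV[R]_d) : (w *m hess f z *m u^T) 0 0 <= b * vnorm2 u * vnorm2 w.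
Proof.
have phi_der := is_derive_line_slope z u w 0.
rewrite scale0r addr0 in phi_der.
rewrite -(@derive_val _ _ _ _ _ _ _ phi_der) /derive.
apply: limr_le; first exact: (@ex_derive _ _ _ _ _ _ _ phi_der).
apply: nearW => h /=.
rewrite /shift /= scale0r !addr0 -mxdotBl.
have [->|h_neq0] := eqVneq h 0.
  by rewrite invr0 scale0r mulr_ge0 ?mulr_ge0 ?vnorm2_ge0 ?ltW.
have step : z + (h *: (1 : R)) *: u - z = h *: u.
  by rewrite addrC addKr -[h *: 1]/(h * 1) mulr1.
have increment_le : `|mxdot (grad f (z + (h *: (1 : R)) *: u) - grad f z) w|
    <= b * `|h| * vnorm2 u * vnorm2 w.
  apply: le_trans (normr_mxdot_le _ _) _; apply: ler_wpM2r; first exact: vnorm2_ge0.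
  by apply: le_trans (grad_lipschitz _ _) _; rewrite step vnorm2Z mulrA.
apply: le_trans (ler_norm _) _.
rewrite -[_ *: _]/(_ * _) normrM normfV ler_pdivrMl ?normr_gt0 //.
by apply: le_trans increment_le _; rewrite [b * _]mulrC -!mulrA.
Qed.

Lemma hess_mulmx_le z (c : 'cV[R]_d) : vnorm2 (hess f z *m c) <= b * vnorm2 c.
Proof.
set v := hess f z *m c.
have := hess_bilinear_le z c^T v^T.
rewrite trmxK -mulmxA -/v -mxdot_cV -sqr_vnorm2 !vnorm2_tr.
have [->|v_neq0] := eqVneq (vnorm2 v) 0; first by move=> _; rewrite mulr_ge0 ?vnorm2_ge0 ?ltW.
have v_gt0 : 0 < vnorm2 v by rewrite lt_def v_neq0 vnorm2_ge0.
by rewrite expr2 ler_pM2r.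
Qed.

Lemma grad_eq0_of_min x : (forall y, f x <= f y) -> grad f x = 0.
Proof.
move=> x_min; set g := grad f x.
have step_sqr : b / 2 * vnorm2 (- (b^-1 *: g)) ^+ 2 = b^-1 * mxdot g g / 2.
  by rewrite vnorm2N vnorm2Z ger0_norm ?invr_ge0 ?ltW // exprMn sqr_vnorm2; field; rewrite gt_eqF.
have step_dot : mxdot g (- (b^-1 *: g)) = - (b^-1 * mxdot g g) by rewrite mxdotNr mxdotZr.
have := taylor_upper x (- (b^-1 *: g)); rewrite step_sqr step_dot.
have := x_min (x - b^-1 *: g) => fx_le up.
have : b^-1 * mxdot g g <= 0 by lra.
rewrite pmulr_rle0 ?invr_gt0 // => gg_le0.
by apply/eqP; rewrite -mxdotxx_eq0 eq_le gg_le0 mxdotxx_ge0.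
Qed.

Lemma grad_eq0_vnorm2_le p : grad f p = 0 -> a * vnorm2 p <= vnorm2 (grad f 0).
Proof.
move=> grad_p0; have := grad_strongly_monotone 0 p.
rewrite add0r grad_p0 sub0r mxdotNl.
have [->|p_neq0] := eqVneq p 0; first by rewrite vnorm20 mulr0 vnorm2_ge0.
have p_gt0 : 0 < vnorm2 p by rewrite vnorm2_gt0.
have dot_le : - mxdot (grad f 0) p <= vnorm2 (grad f 0) * vnorm2 p.
  by apply: le_trans (ler_norm _) _; rewrite normrN normr_mxdot_le.
move/le_trans/(_ dot_le).
by rewrite expr2 mulrA ler_pM2r.
Qed.

(* Outside the ball of radius [2 |grad f 0| / a] the lower quadratic model
   exceeds [f 0], so a minimizer over a box around it is global. *)
Lemma exists_minimizer : 0 < a -> exists x, forall y, f x <= f y.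
Proof.
move=> a_gt0; set g := vnorm2 (grad f 0); set r := 2 * g / a.
have r_ge0 : 0 <= r by rewrite divr_ge0 ?mulr_ge0 ?vnorm2_ge0 ?ltW.
pose box := [set v : 'rV[R]_d | forall i, (`[- r, r]%classic : set R) (v 0 i)].
have box_compact : compact box.
  by apply: (@rV_compact _ _ (fun _ => `[- r, r]%classic)) => i; exact: segment_compact.
have box0 : box 0 by move=> i /=; rewrite mxE in_itv /= oppr_le0 r_ge0.
have f_cont : continuous f.
  by move=> x; apply: differentiable_continuous; case: (f_twice_diff x).
have [c _ c_min] := EVT_min_rV (ex_intro _ 0 box0) box_compact (continuous_subspaceT f_cont).
exists c => y; have [y_le|r_lt] := leP (vnorm2 y) r.
  apply: c_min; rewrite inE => i /=; rewrite in_itv /= -ler_norml.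
  exact: le_trans (normr_entry_le_vnorm2 _ _ _) y_le.
apply: le_trans (c_min 0 _) _; first by rewrite inE.
have model := taylor_lower 0 y; rewrite add0r in model.
have := normr_mxdot_le (grad f 0) y; rewrite -/g ler_norml => /andP[dot_ge _].
have far : 2 * g < a * vnorm2 y by rewrite -ltr_pdivrMl // mulrC.
have := vnorm2_ge0 y; nra.
Qed.

End ConvexSmoothFunction.

Section Simplex.
Variables (R : realType) (n : nat).
Implicit Types b s : 'I_n -> R.

Lemma simplex_dim_gt0 b : in_simplex b -> (0 < n)%N.
Proof.
case: n b => // b [_]; rewrite big_ord0 => /eqP.
by rewrite eq_sym oner_eq0.
Qed.

Lemma simplex_wsum_ge b s lo : in_simplex b -> (forall i, lo <= s i) ->
  lo <= \sum_i b i * s i.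
Proof.
move=> [b_ge0 b_sum1] lo_le; rewrite -[lo]mul1r -b_sum1 mulr_suml.
by apply: ler_sum => i _; apply: ler_wpM2l.
Qed.

Lemma simplex_wsum_le b s hi : in_simplex b -> (forall i, s i <= hi) ->
  \sum_i b i * s i <= hi.
Proof.
move=> [b_ge0 b_sum1] le_hi; rewrite -[hi]mul1r -b_sum1 mulr_suml.
by apply: ler_sum => i _; apply: ler_wpM2l.
Qed.

Lemma simplex_le1 b i : in_simplex b -> b i <= 1.
Proof.
move=> [b_ge0 <-]; rewrite (bigD1 i) //= lerDl.
by apply: sumr_ge0 => j _.
Qed.

Definition simplex_vertex i : 'I_n -> R := fun k => (k == i)%:R.

Lemma simplex_vertexP i : in_simplex (simplex_vertex i).
Proof.
split=> [k|]; first by rewrite ler0n.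
by rewrite (bigD1 i) //= big1 /simplex_vertex ?eqxx ?addr0 // => k /negbTE ->.
Qed.

Lemma wsum_scaleB_mulmx_le d (b b' : 'I_n -> R) (H H' : 'I_n -> 'M[R]_d)
    (c : 'cV[R]_d) (K1 K2 : R) :
  in_simplex b' -> (forall i, vnorm2 (H i *m c) <= K1 * vnorm2 c) ->
  (forall i, vnorm2 ((H i - H' i) *m c) <= K2 * vnorm2 c) ->
  vnorm2 ((\sum_i b i *: H i - \sum_i b' i *: H' i) *m c)
    <= (l1dist b b' * K1 + K2) * vnorm2 c.
Proof.
move=> [b'_ge0 b'_sum1] H_le dH_le.
have -> : \sum_i b i *: H i - \sum_i b' i *: H' i =
    \sum_i ((b i - b' i) *: H i + b' i *: (H i - H' i)).
  by rewrite -sumrB; apply: eq_bigr => i _; rewrite scalerBl scalerBr addrA subrK.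
have -> : (l1dist b b' * K1 + K2) * vnorm2 c =
    \sum_i (`|b i - b' i| * (K1 * vnorm2 c) + b' i * (K2 * vnorm2 c)).
  by rewrite big_split /= -!mulr_suml b'_sum1 mul1r mulrDl mulrA.
rewrite mulmx_suml; apply: le_trans (vnorm2_sum _ _ _) _; apply: ler_sum => i _.
rewrite mulmxDl -!scalemxAl; apply: le_trans (vnorm2D _ _) _.
by rewrite !vnorm2Z (ger0_norm (b'_ge0 i)); apply: lerD; apply: ler_wpM2l.
Qed.

End Simplex.

Section Scalarization.
Variables (R : realType) (n d : nat) (F : 'I_n -> 'rV[R]_d -> R).
Hypothesis F_twice_diff : forall i, twice_diff (F i).

Lemma fbetaE b : fbeta F b = \sum_i (b i \*: F i).
Proof. by rewrite fct_sumE. Qed.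

Lemma fbeta_vertex i : fbeta F (simplex_vertex R i) = F i.
Proof.
apply: funext => x; rewrite /fbeta (bigD1 i) //= big1 /simplex_vertex ?eqxx ?mul1r ?addr0 //.
by move=> k /negbTE ->; rewrite mul0r.
Qed.

Lemma grad_fbeta b x : grad (fbeta F b) x = \sum_i b i *: grad (F i) x.
Proof.
apply/rowP => j; rewrite mxE summxE /partial fbetaE derive_sum => [|i].
  apply: eq_bigr => i _; rewrite deriveZ ?mxE //.
  exact/diff_derivable/(F_twice_diff i x).1.
exact/derivableZ/diff_derivable/(F_twice_diff i x).1.
Qed.

Lemma hess_fbeta b x : hess (fbeta F b) x = \sum_i b i *: hess (F i) x.
Proof.
apply/matrixP => j k; rewrite mxE summxE.
have -> : partial (fbeta F b) j = \sum_i (b i \*: partial (F i) j).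
  apply: funext => y; rewrite fct_sumE.
  have := congr1 (fun M : 'rV[R]_d => M 0 j) (grad_fbeta b y).
  by rewrite !mxE summxE => ->; apply: eq_bigr => i _; rewrite !mxE.
have dpartial i : derivable (partial (F i) j) x (ebasis R k).
  exact/derivable_partial/(F_twice_diff i x).2.
rewrite derive_sum => [|i]; last exact: derivableZ.
by apply: eq_bigr => i _; rewrite deriveZ // !mxE.
Qed.

Lemma fbeta_twice_diff b : twice_diff (fbeta F b).
Proof.
move=> x; split.
  by rewrite fbetaE; apply: differentiable_sum => i; apply/differentiableZ/(F_twice_diff i x).1.
have -> : grad (fbeta F b) = \sum_i (b i \*: grad (F i)).
  by apply: funext => y; rewrite grad_fbeta fct_sumE.
by apply: differentiable_sum => i; apply/differentiableZ/(F_twice_diff i x).2.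
Qed.

Lemma fbeta_hess_bounds (mu L : R) b : in_simplex b ->
  (forall i x (u : 'rV[R]_d), mu * vnorm2 u ^+ 2 <= (u *m hess (F i) x *m u^T) 0 0 /\
     (u *m hess (F i) x *m u^T) 0 0 <= L * vnorm2 u ^+ 2) ->
  forall x (u : 'rV[R]_d), mu * vnorm2 u ^+ 2 <= (u *m hess (fbeta F b) x *m u^T) 0 0 /\
     (u *m hess (fbeta F b) x *m u^T) 0 0 <= L * vnorm2 u ^+ 2.
Proof.
move=> b_simplex F_bounds x u.
have -> : (u *m hess (fbeta F b) x *m u^T) 0 0 = \sum_i b i * (u *m hess (F i) x *m u^T) 0 0.
  rewrite hess_fbeta mulmx_sumr mulmx_suml summxE; apply: eq_bigr => i _.
  by rewrite -scalemxAr -scalemxAl mxE.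
split; first by apply: simplex_wsum_ge => // i; case: (F_bounds i x u).
by apply: simplex_wsum_le => // i; case: (F_bounds i x u).
Qed.

Lemma col_dxstar b j :
  col j (dxstar F b) =
  - (invmx (hess (fbeta F b) (xstar F b)) *m (grad (F j) (xstar F b))^T).
Proof.
rewrite /dxstar colE mulNmx -mulmxA -colE -tr_row; congr (- (_ *m _^T)).
by apply/rowP => k; rewrite !mxE.
Qed.

End Scalarization.

Lemma pareto_diam_dim0 (R : realType) n (F : 'I_n -> 'rV[R]_0 -> R) : pareto_diam F = 0.
Proof.
rewrite /pareto_diam.
suff /subset_set1[->|->] : [set r : R | exists x y : 'rV[R]_0,
    pareto_set F x /\ pareto_set F y /\ r = vnorm2 (x - y)] `<=` [set 0].
- exact: sup0.
- exact: sup1.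
by move=> _ [x [y [_ [_ ->]]]]; rewrite thinmx0 vnorm20.
Qed.

Lemma jacobian_perturbation_arith (R : realType) (mu L LH Rd dl c X N : R) :
  0 < mu -> 0 <= L -> 0 <= LH -> 0 <= dl ->
  0 <= c <= L * Rd / mu -> 0 <= X <= L * Rd / mu * dl ->
  N <= (dl * L + LH * X) * c + L * X ->
  N / mu <= 2 * L ^+ 2 * Rd / mu ^+ 2 * (1 + LH * Rd / mu) * dl.
Proof.
move=> mu_gt0 L_ge0 LH_ge0 dl_ge0 /andP[c_ge0 c_le] /andP[X_ge0 X_le] N_le.
have -> : 2 * L ^+ 2 * Rd / mu ^+ 2 * (1 + LH * Rd / mu) * dl =
    (2 * L * (L * Rd / mu) * dl + 2 * LH * (L * Rd / mu) * (L * Rd / mu) * dl) / mu.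
  by field; rewrite gt_eqF.
apply: ler_wpM2r; first by rewrite invr_ge0 ltW.
move: c_le X_le; set P := L * Rd / mu => c_le X_le.
have P_ge0 : 0 <= P := le_trans c_ge0 c_le.
have : (dl * L + LH * X) * c <= (dl * L + LH * (P * dl)) * P.
  apply: ler_pM => //; first by rewrite addr_ge0 ?mulr_ge0.
  by rewrite lerD2l; apply: ler_wpM2l.
have : L * X <= L * (P * dl) by apply: ler_wpM2l.
have := mulr_ge0 (mulr_ge0 (mulr_ge0 LH_ge0 P_ge0) P_ge0) dl_ge0.
lra.
Qed.

Section ParetoSet.
Variables (R : realType) (n d : nat) (F : 'I_n -> 'rV[R]_d -> R) (mu L : R).
Hypothesis mu_gt0 : 0 < mu.
Hypothesis mu_le_L : mu <= L.
Hypothesis F_twice_diff : forall i, twice_diff (F i).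
Hypothesis F_hess_bounds : forall i x (u : 'rV[R]_d),
  mu * vnorm2 u ^+ 2 <= (u *m hess (F i) x *m u^T) 0 0 /\
  (u *m hess (F i) x *m u^T) 0 0 <= L * vnorm2 u ^+ 2.

Let L_gt0 : 0 < L := lt_le_trans mu_gt0 mu_le_L.
Let twice_diff_fbeta b := fbeta_twice_diff F_twice_diff b.
Let fbeta_bounds b (b_simplex : in_simplex b) :=
  fbeta_hess_bounds F_twice_diff b_simplex F_hess_bounds.

Lemma xstar_min b : in_simplex b -> forall y, fbeta F b (xstar F b) <= fbeta F b y.
Proof.
move=> b_simplex; apply: (xgetPex 0 (P := [set x | forall y, fbeta F b x <= fbeta F b y])).
exact: exists_minimizer (twice_diff_fbeta b) (fbeta_bounds b_simplex) mu_gt0.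
Qed.

Lemma grad_xstar b : in_simplex b -> grad (fbeta F b) (xstar F b) = 0.
Proof.
move=> b_simplex.
exact: grad_eq0_of_min (twice_diff_fbeta b) (fbeta_bounds b_simplex) L_gt0 _ (xstar_min b_simplex).
Qed.

Lemma xstar_pareto b : in_simplex b -> pareto_set F (xstar F b).
Proof. by move=> b_simplex; exists b; split => //; exact: grad_xstar. Qed.

Lemma pareto_set_bounded p :
  pareto_set F p -> vnorm2 p <= (\sum_i vnorm2 (grad (F i) 0)) / mu.
Proof.
move=> [b [b_simplex grad_p0]]; rewrite ler_pdivlMr // mulrC.
apply: le_trans (grad_eq0_vnorm2_le (twice_diff_fbeta b) (fbeta_bounds b_simplex) grad_p0) _.
rewrite grad_fbeta //; apply: le_trans (vnorm2_sum _ _ _) _; apply: ler_sum => i _.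
have [b_ge0 _] := b_simplex.
by rewrite vnorm2Z ger0_norm // ler_piMl ?vnorm2_ge0 // (simplex_le1 i b_simplex).
Qed.

Lemma pareto_dist_le_diam x y :
  pareto_set F x -> pareto_set F y -> vnorm2 (x - y) <= pareto_diam F.
Proof.
move=> x_pareto y_pareto; apply: ub_le_sup; last by exists x, y.
set M := (\sum_i vnorm2 (grad (F i) 0)) / mu.
exists (M + M) => _ [x' [y' [x'_pareto [y'_pareto ->]]]].
exact: le_trans (vnorm2B _ _) (lerD (pareto_set_bounded x'_pareto) (pareto_set_bounded y'_pareto)).
Qed.

Lemma pareto_diam_ge0 (b : 'I_n -> R) : in_simplex b -> 0 <= pareto_diam F.
Proof.
move=> b_simplex.
have := pareto_dist_le_diam (xstar_pareto b_simplex) (xstar_pareto b_simplex).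
by rewrite subrr vnorm20.
Qed.

(* [F i] is minimized at the vertex [e_i] of the simplex, which lies in the Pareto set. *)
Lemma grad_xstar_le i b : in_simplex b ->
  vnorm2 (grad (F i) (xstar F b)) <= L * pareto_diam F.
Proof.
move=> b_simplex; set xi := xstar F (simplex_vertex R i).
have grad_xi : grad (F i) xi = 0.
  by rewrite -(fbeta_vertex F i) grad_xstar //; exact: simplex_vertexP.
rewrite -[grad (F i) _]subr0 -grad_xi.
apply: le_trans (grad_lipschitz (F_twice_diff i) (F_hess_bounds i) (ltW mu_gt0) L_gt0 _ _) _.
apply: ler_wpM2l; first exact: ltW.
by apply: pareto_dist_le_diam; apply: xstar_pareto => //; exact: simplex_vertexP.
Qed.

Lemma xstar_lipschitz b b' : in_simplex b -> in_simplex b' ->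
  vnorm2 (xstar F b' - xstar F b) <= L * pareto_diam F / mu * l1dist b b'.
Proof.
move=> b_simplex b'_simplex; set x := xstar F b; set x' := xstar F b'; set D := x' - x.
have := grad_strongly_monotone (twice_diff_fbeta b) (fbeta_bounds b_simplex) x D.
have -> : x + D = x' by rewrite /D addrC subrK.
rewrite (grad_xstar b_simplex) subr0.
have -> : mxdot (grad (fbeta F b) x') D = \sum_i (b i - b' i) * mxdot (grad (F i) x') D.
  rewrite -[grad (fbeta F b) x']subr0 -(grad_xstar b'_simplex) !grad_fbeta //.
  by rewrite -sumrB mxdot_suml; apply: eq_bigr => i _; rewrite -scalerBl mxdotZl.
have weights_le : \sum_i (b i - b' i) * mxdot (grad (F i) x') D <=
    l1dist b b' * (L * pareto_diam F * vnorm2 D).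
  rewrite /l1dist mulr_suml; apply: ler_sum => i _.
  apply: le_trans (ler_norm _) _; rewrite normrM ler_wpM2l //.
  apply: le_trans (normr_mxdot_le _ _) _; rewrite ler_wpM2r ?vnorm2_ge0 //.
  exact: grad_xstar_le.
move/le_trans/(_ weights_le).
have dl_ge0 : 0 <= l1dist b b' by apply: sumr_ge0.
have [->|D_neq0] := eqVneq D 0.
  rewrite vnorm20 => _; apply: mulr_ge0 => //.
  by rewrite divr_ge0 ?mulr_ge0 ?(pareto_diam_ge0 b_simplex) ?ltW.
have D_gt0 : 0 < vnorm2 D by rewrite vnorm2_gt0.
rewrite [_ / mu * _]mulrAC ler_pdivlMr //.
clear weights_le; move: (l1dist b b') (L * pareto_diam F) (vnorm2 D) D_gt0 dl_ge0.
by move=> dl K N N_gt0 dl_ge0; nra.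
Qed.

Lemma hess_fbeta_coercive b x : in_simplex b ->
  forall c : 'cV[R]_d, mu * vnorm2 c ^+ 2 <= (c^T *m hess (fbeta F b) x *m c) 0 0.
Proof.
move=> b_simplex c; have := (fbeta_bounds b_simplex x c^T).1.
by rewrite trmxK vnorm2_tr.
Qed.

Variable LH : R.
Hypothesis hess_lipschitz : forall i (x y : 'rV[R]_d),
  spec_norm (hess (F i) x - hess (F i) y) <= LH * vnorm2 (x - y).

Lemma dxstar_col_dist_le b b' j : in_simplex b -> in_simplex b' -> 0 <= LH ->
  vnorm2 (col j (dxstar F b - dxstar F b')) <=
  2 * L ^+ 2 * pareto_diam F / mu ^+ 2 * (1 + LH * pareto_diam F / mu) * l1dist b b'.
Proof.
move=> b_simplex b'_simplex LH_ge0.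
have -> : col j (dxstar F b - dxstar F b') = col j (dxstar F b) - col j (dxstar F b').
  by apply/colP => i; rewrite !mxE.
rewrite (col_dxstar F b j) (col_dxstar F b' j).
set x := xstar F b; set x' := xstar F b'.
set A := hess (fbeta F b) x; set A' := hess (fbeta F b') x'.
set g := (grad (F j) x)^T; set g' := (grad (F j) x')^T.
have A_coercive := hess_fbeta_coercive x b_simplex.
have A'_coercive := hess_fbeta_coercive x' b'_simplex.
rewrite (sub_opp_invmx_mulmx g g' (coercive_unitmx mu_gt0 A_coercive)
  (coercive_unitmx mu_gt0 A'_coercive)).
apply: le_trans (coercive_invmx_le mu_gt0 A_coercive _) _.
set c := invmx A' *m g'.
have c_le : vnorm2 c <= L * pareto_diam F / mu.
  apply: le_trans (coercive_invmx_le mu_gt0 A'_coercive _) _.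
  by rewrite vnorm2_tr ler_pM2r ?invr_gt0 // grad_xstar_le.
have g_le : vnorm2 (g' - g) <= L * vnorm2 (x' - x).
  rewrite -linearB vnorm2_tr.
  exact: grad_lipschitz (F_twice_diff j) (F_hess_bounds j) (ltW mu_gt0) L_gt0 _ _.
have A_le : vnorm2 ((A - A') *m c) <= (l1dist b b' * L + LH * vnorm2 (x' - x)) * vnorm2 c.
  rewrite /A /A' !hess_fbeta //; apply: wsum_scaleB_mulmx_le => // i.
    exact: hess_mulmx_le (F_twice_diff i) (F_hess_bounds i) (ltW mu_gt0) L_gt0 x c.
  apply: le_trans (spec_norm_mulmx_le _ _) _; rewrite ler_wpM2r ?vnorm2_ge0 //.
  by apply: le_trans (hess_lipschitz i x x') _; rewrite -vnorm2N opprB.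
have N_le := le_trans (vnorm2D _ _) (lerD A_le g_le).
apply: jacobian_perturbation_arith mu_gt0 (ltW L_gt0) LH_ge0 _ _ _ N_le.
- by apply: sumr_ge0.
- by rewrite vnorm2_ge0 c_le.
- by rewrite vnorm2_ge0 xstar_lipschitz.
Qed.

End ParetoSet.

Unset Implicit Arguments.

Theorem lemma9 (R : realType) (n d : nat) (F : 'I_n -> 'rV[R]_d -> R)
  (mu L LH : R) (hmu : 0 < mu) (hmuL : mu <= L)
  (hdiff : forall i, twice_diff (F i))
  (hhess : forall i (x : 'rV[R]_d) (v : 'cV[R]_d),
      mu * vnorm2 v ^+ 2 <= (v^T *m hess (F i) x *m v) 0 0
      /\ (v^T *m hess (F i) x *m v) 0 0 <= L * vnorm2 v ^+ 2)
  (hlip : forall i (x y : 'rV[R]_d),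
      spec_norm (hess (F i) x - hess (F i) y) <= LH * vnorm2 (x - y))
  (beta beta' : 'I_n -> R) (hb : in_simplex beta) (hb' : in_simplex beta') :
  norm12 (dxstar F beta - dxstar F beta')
    <= 2 * L ^+ 2 * pareto_diam F / mu ^+ 2
       * (1 + LH * pareto_diam F / mu) * l1dist beta beta'.
Proof.
have n_gt0 := simplex_dim_gt0 hb.
apply: (norm12_le_col n_gt0) => j.
have [d0|d_gt0] := posnP d.
  by subst d; rewrite flatmx0 vnorm20 pareto_diam_dim0 !(mulr0, mul0r).
have hess_bounds i x (u : 'rV[R]_d) :
    mu * vnorm2 u ^+ 2 <= (u *m hess (F i) x *m u^T) 0 0 /\
    (u *m hess (F i) x *m u^T) 0 0 <= L * vnorm2 u ^+ 2.
  by have := hhess i x u^T; rewrite trmxK vnorm2_tr.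
have LH_ge0 := lipschitz_const_ge0 d_gt0 (hlip (Ordinal n_gt0)).
exact: dxstar_col_dist_le.
Qed.
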